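(* Let $\beta>1$ and define $\psi_\beta:[0,1]\to[0,1]$ by $\psi_\beta(x)=\psi_1(x):=2^{\beta-1}x^\beta$ for $x\in[0,1/2]$ and $\psi_\beta(x)=\psi_2(x):=2^{\beta-1}(x-1/2)^\beta+1/2$ for $x\in[1/2,1]$. Let $a_0=b_0=1$ and for $k\ge1$ let $$a_k=\int_0^{1/2}\int_0^{\psi_1(x_1)}\cdots\int_0^{\psi_1(x_{k-1})}dx_k\cdots dx_1,\qquad b_k=\int_{1/2}^{1}\int_{1/2}^{\psi_2(x_1)}\cdots\int_{1/2}^{\psi_2(x_{k-1})}dx_k\cdots dx_1,$$ $$d_k=\int_0^{1}\int_0^{\psi_\beta(x_1)}\cdots\int_0^{\psi_\beta(x_{k-1})}dx_k\cdots dx_1 .$$ Then for $n=1,2,\dots$: (1) $d_n=\sum_{l=0}^n b_l\,a_{n-l}$; (2) $d_n<\dfrac{\beta^{(-n^2/2+n)/4}}{n!}$. *)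

From Stdlib Require Import Reals.
From Coquelicot Require Import Coquelicot.
Open Scope R_scope.

(* real power x^b for x >= 0, with the convention 0^b = 0 (b > 0). *)
Definition rpow (x b : R) : R := if Rle_dec x 0 then 0 else Rpower x b.

Definition psi1 (beta x : R) : R := Rpower 2 (beta - 1) * rpow x beta.
Definition psi2 (beta x : R) : R := Rpower 2 (beta - 1) * rpow (x - 1/2) beta + 1/2.
Definition psi_beta (beta x : R) : R :=
  if Rle_dec x (1/2) then psi1 beta x else psi2 beta x.

Fixpoint iter_in (psi : R -> R) (c : R) (j : nat) (x : R) : R :=
  match j with
  | O => 1
  | S j' => RInt (fun t => iter_in psi c j' t) c (psi x)
  end.

(* itint psi c e k = \int_c^e \int_c^{psi x1} ... \int_c^{psi x_{k-1}} dx_k ... dx_1,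
   and = 1 for k = 0. *)
Definition itint (psi : R -> R) (c e : R) (k : nat) : R :=
  match k with
  | O => 1
  | S k' => RInt (fun x => iter_in psi c k' x) c e
  end.

Definition a_seq (beta : R) (k : nat) : R := itint (psi1 beta) 0 (1/2) k.
Definition b_seq (beta : R) (k : nat) : R := itint (psi2 beta) (1/2) 1 k.
Definition d_seq (beta : R) (k : nat) : R := itint (psi_beta beta) 0 1 k.

(* Write [A_j] for the iterated integral over [psi1] and [[j]_beta = 1 + beta + ... + beta^(j-1)]
   for the beta-integers.  By induction, [A_j(x) = (2x)^(beta [j]_beta) / (2^j [j]_beta!)], so
   [a_k = 1 / (2^k [k]_beta!)]; and [b_k = a_k] because [psi2] is [psi1] translated by [1/2].
   On [[1/2, 1]], [psi_beta] is also the translate of [psi1]; so for the iterated integrals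
   [I_n] over [psi_beta], splitting each [\int_0^(psi_beta x)] at [1/2] gives
   [I_n(y + 1/2) = \sum_l A_l(y) a_(n-l)], and [y = 1/2] is (1).  For (2), AM-GM gives
   [[i+1]_beta >= (i+1) beta^(i/2)], hence [a_k <= beta^(-k(k-1)/4) / (2^k k!)];
   the exponent of [a_l a_(n-l)] is at most [-(n^2 - 2n)/8], and the binomial theorem sums
   the factorials to [2^n / n!]. *)

From Stdlib Require Import Reals Lra Lia Psatz FunctionalExtensionality PropExtensionality.
From Coquelicot Require Import Coquelicot.
Open Scope R_scope.

Lemma Rpower_gt0 x b : 0 < Rpower x b.
Proof. apply exp_pos. Qed.

Lemma rpow_Rpower x b : 0 < x -> rpow x b = Rpower x b.
Proof. intros Hx; unfold rpow; destruct (Rle_dec x 0); [lra | reflexivity]. Qed.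

Lemma rpow_nonpos x b : x <= 0 -> rpow x b = 0.
Proof. intros Hx; unfold rpow; destruct (Rle_dec x 0); [reflexivity | lra]. Qed.

Lemma rpow_ge0 x b : 0 <= rpow x b.
Proof. unfold rpow; destruct (Rle_dec x 0); [lra | left; apply Rpower_gt0]. Qed.

Lemma rpow_mult_distr x y b : 0 <= x -> 0 <= y -> rpow (x * y) b = rpow x b * rpow y b.
Proof.
  intros [Hx | <-] [Hy | <-]; try (rewrite ?Rmult_0_l, ?Rmult_0_r, !(rpow_nonpos 0) by lra; ring).
  rewrite !rpow_Rpower by nra. symmetry; apply Rpower_mult_distr; assumption.
Qed.

Lemma rpow_mult x a b : 0 <= x -> rpow (rpow x a) b = rpow x (a * b).
Proof.
  intros [Hx | <-].
  - rewrite (rpow_Rpower x a), !rpow_Rpower by (try apply Rpower_gt0; exact Hx).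
    apply Rpower_mult.
  - rewrite (rpow_nonpos 0 a), (rpow_nonpos 0 b), (rpow_nonpos 0 (a * b)) by lra.
    reflexivity.
Qed.

Lemma rpow_le x y b : 0 <= b -> 0 <= x <= y -> rpow x b <= rpow y b.
Proof.
  intros Hb [[Hx | <-] Hxy].
  - rewrite !rpow_Rpower by lra. apply Rle_Rpower_l; lra.
  - rewrite (rpow_nonpos 0) by lra. apply rpow_ge0.
Qed.

Lemma rpow_0_r x : 0 < x -> rpow x 0 = 1.
Proof. intros Hx. rewrite rpow_Rpower by exact Hx. apply Rpower_O, Hx. Qed.

Lemma rpow_1_l b : rpow 1 b = 1.
Proof. rewrite rpow_Rpower by lra. unfold Rpower. rewrite ln_1, Rmult_0_r. apply exp_0. Qed.

(* The difference quotient at [0] is [rpow h b], which tends to [0] since [b > 0]. *)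
Lemma is_derive_rpow_succ_0 b : 0 < b -> is_derive (fun t => rpow t (b + 1)) 0 0.
Proof.
  intros Hb. apply is_derive_Reals; intros eps Heps.
  exists (mkposreal (Rpower eps (/ b)) (Rpower_gt0 _ _)); intros h Hh0 Hh; simpl in Hh.
  rewrite Rplus_0_l, (rpow_nonpos 0) by lra.
  destruct (Rle_dec h 0) as [Hneg | Hpos].
  - rewrite rpow_nonpos by exact Hneg.
    replace ((0 - 0) / h - 0) with 0 by (field; exact Hh0). rewrite Rabs_R0; exact Heps.
  - rewrite rpow_Rpower, Rpower_plus, Rpower_1 by lra.
    replace ((Rpower h b * h - 0) / h - 0) with (Rpower h b) by (field; lra).
    rewrite Rabs_pos_eq by (left; apply Rpower_gt0).
    rewrite Rabs_pos_eq in Hh by lra.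
    replace eps with (Rpower (Rpower eps (/ b)) b)
      by (rewrite Rpower_mult, Rinv_l, Rpower_1 by lra; reflexivity).
    apply Rlt_Rpower_l; lra.
Qed.

Lemma is_derive_rpow_succ b x : 0 < b ->
  is_derive (fun t => rpow t (b + 1)) x ((b + 1) * rpow x b).
Proof.
  intros Hb.
  destruct (Rtotal_order x 0) as [Hx | [-> | Hx]].
  - rewrite rpow_nonpos, Rmult_0_r by lra.
    apply is_derive_ext_loc with (f := fun _ => 0).
    + exists (mkposreal (- x) ltac:(lra)); intros t Ht.
      apply Rabs_def2 in Ht; simpl in Ht.
      rewrite rpow_nonpos; [reflexivity | unfold minus, plus, opp in Ht; simpl in Ht; lra].
    + apply (is_derive_const (K := R_AbsRing) (V := R_NormedModule)).
  - rewrite (rpow_nonpos 0), Rmult_0_r by lra. apply is_derive_rpow_succ_0, Hb.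
  - rewrite rpow_Rpower by exact Hx.
    apply is_derive_ext_loc with (f := fun t => Rpower t (b + 1)).
    + exists (mkposreal x Hx); intros t Ht.
      apply Rabs_def2 in Ht; simpl in Ht.
      rewrite rpow_Rpower; [reflexivity | unfold minus, plus, opp in Ht; simpl in Ht; lra].
    + apply is_derive_Reals.
      replace b with (b + 1 - 1) at 2 by ring.
      apply derivable_pt_lim_power, Hx.
Qed.

Lemma continuous_rpow b x : 1 < b -> continuous (fun t => rpow t b) x.
Proof.
  intros Hb. apply (ex_derive_continuous (K := R_AbsRing) (V := R_NormedModule)).
  exists ((b - 1 + 1) * rpow x (b - 1)).
  apply is_derive_ext with (f := fun t => rpow t (b - 1 + 1)).
  - intros t; f_equal; ring.
  - apply is_derive_rpow_succ; lra.
Qed.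

(* Only the exponents [0] and [> 1] occur below (they are [beta * [j]_beta]); for [b > 1]
   the integrand is differentiable, hence continuous, on all of [[0, c]]. *)
Lemma is_RInt_rpow b c : b = 0 \/ 1 < b -> 0 <= c ->
  is_RInt (fun t => rpow t b) 0 c (rpow c (b + 1) / (b + 1)).
Proof.
  intros [-> | Hb] Hc.
  - rewrite Rplus_0_l.
    destruct Hc as [Hc | <-].
    + rewrite rpow_Rpower, Rpower_1, Rdiv_1_r by exact Hc.
      apply is_RInt_ext with (f := fun _ => 1).
      * intros t Ht. rewrite Rmin_left, Rmax_right in Ht by lra.
        symmetry; apply rpow_0_r; lra.
      * replace c with (scal (c - 0) 1) at 2
          by (unfold scal; simpl; unfold mult; simpl; ring).
        apply (is_RInt_const (V := R_NormedModule)).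
    + rewrite rpow_nonpos, Rdiv_0_l by lra. apply (is_RInt_point (V := R_NormedModule)).
  - replace (rpow c (b + 1) / (b + 1))
      with (minus (rpow c (b + 1) / (b + 1)) (rpow 0 (b + 1) / (b + 1)))
      by (rewrite (rpow_nonpos 0 (b + 1)) by (right; reflexivity);
          unfold minus, plus, opp; simpl; field; lra).
    apply (is_RInt_derive (V := R_CompleteNormedModule) (fun t => rpow t (b + 1) / (b + 1))).
    + intros x _.
      replace (rpow x b) with (/ (b + 1) * ((b + 1) * rpow x b)) by (field; lra).
      apply is_derive_ext with (f := fun t => / (b + 1) * rpow t (b + 1));
        [intros t; apply Rmult_comm |].
      apply (is_derive_scal (fun t => rpow t (b + 1))).
      apply is_derive_rpow_succ; lra.
    + intros x _. apply continuous_rpow, Hb.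
Qed.

Lemma is_RInt_rpow_double b c : b = 0 \/ 1 < b -> 0 <= c ->
  is_RInt (fun t => rpow (2 * t) b) 0 c (rpow (2 * c) (b + 1) / (2 * (b + 1))).
Proof.
  intros Hb Hc.
  assert (H := is_RInt_rpow b (2 * c) Hb ltac:(lra)).
  replace 0 with (2 * 0 + 0) in H at 1 by ring.
  replace (2 * c) with (2 * c + 0) in H at 1 by ring.
  apply (is_RInt_comp_lin (V := R_NormedModule)), (is_RInt_scal _ _ _ (/ 2)) in H.
  replace (rpow (2 * c) (b + 1) / (2 * (b + 1)))
    with (scal (/ 2) (rpow (2 * c) (b + 1) / (b + 1)))
    by (unfold scal; simpl; unfold mult; simpl; field; lra).
  apply is_RInt_ext with (2 := H).
  intros t _. unfold scal; simpl; unfold mult; simpl.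
  rewrite Rplus_0_r. field.
Qed.

Lemma is_RInt_translate (f : R -> R) a b h l :
  is_RInt f (a + h) (b + h) l <-> is_RInt (fun t => f (t + h)) a b l.
Proof.
  split; intros H.
  - replace (a + h) with (1 * a + h) in H by ring.
    replace (b + h) with (1 * b + h) in H by ring.
    apply (is_RInt_comp_lin (V := R_NormedModule)) in H.
    apply is_RInt_ext with (2 := H); intros t _.
    unfold scal; simpl; unfold mult; simpl. rewrite !Rmult_1_l; reflexivity.
  - assert (H' : is_RInt (fun t => f (t + h)) (1 * (a + h) + - h) (1 * (b + h) + - h) l)
      by (replace (1 * (a + h) + - h) with a by ring;
          replace (1 * (b + h) + - h) with b by ring; exact H).
    apply (is_RInt_comp_lin (V := R_NormedModule)) in H'.
    apply is_RInt_ext with (2 := H'); intros t _.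
    unfold scal; simpl; unfold mult; simpl. rewrite !Rmult_1_l. f_equal; ring.
Qed.

(* [RInt] is a description operator, so equivalent specifications give equal values. *)
Lemma RInt_translate (f : R -> R) a b h :
  RInt f (a + h) (b + h) = RInt (fun t => f (t + h)) a b.
Proof.
  unfold RInt. f_equal. apply functional_extensionality; intros l.
  apply propositional_extensionality, is_RInt_translate.
Qed.

Lemma is_RInt_sum_f_R0 (f : nat -> R -> R) (l : nat -> R) a b n :
  (forall k, (k <= n)%nat -> is_RInt (f k) a b (l k)) ->
  is_RInt (fun t => sum_f_R0 (fun k => f k t) n) a b (sum_f_R0 l n).
Proof.
  induction n as [| n IH]; intros Hf; simpl; [apply Hf; lia |].
  apply (is_RInt_plus (V := R_NormedModule) (fun t => sum_f_R0 (fun k => f k t) n) (f (S n)));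
    [apply IH; intros k Hk |]; apply Hf; lia.
Qed.

Lemma itint_iter_in psi c x k : itint psi c (psi x) k = iter_in psi c k x.
Proof. destruct k; reflexivity. Qed.

Lemma iter_in_ext_on (psi phi : R -> R) c e j x :
  (forall y, c <= y <= e -> psi y = phi y /\ c <= psi y <= e) ->
  c <= x <= e -> iter_in psi c j x = iter_in phi c j x.
Proof.
  intros Hpsi. revert x. induction j as [| j IH]; intros x Hx; [reflexivity |].
  simpl. destruct (Hpsi x Hx) as [<- Hrange].
  apply RInt_ext. intros t Ht. rewrite Rmin_left, Rmax_right in Ht by lra.
  apply IH. lra.
Qed.

Lemma iter_in_translate (psi phi : R -> R) c h j x :
  (forall y, psi (y + h) = phi y + h) ->
  iter_in psi (c + h) j (x + h) = iter_in phi c j x.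
Proof.
  intros Hpsi. revert x. induction j as [| j IH]; intros x; [reflexivity |].
  simpl. rewrite Hpsi, RInt_translate.
  apply RInt_ext. intros t _. apply IH.
Qed.

Fixpoint qint (q : R) (j : nat) : R :=
  match j with O => 0 | S j' => 1 + q * qint q j' end.

Fixpoint qfact (q : R) (j : nat) : R :=
  match j with O => 1 | S j' => qfact q j' * qint q (S j') end.

Lemma qint_ge0 q j : 0 <= q -> 0 <= qint q j.
Proof. intros Hq; induction j as [| j IH]; simpl; nra. Qed.

Lemma qint_succ_ge1 q j : 0 <= q -> 1 <= qint q (S j).
Proof. intros Hq; simpl; pose proof (qint_ge0 q j Hq); nra. Qed.

Lemma qfact_gt0 q j : 0 <= q -> 0 < qfact q j.
Proof.
  intros Hq; induction j as [| j IH]; simpl; [lra |].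
  pose proof (qint_succ_ge1 q j Hq); simpl in *; nra.
Qed.

Definition iter_psi1_closed (beta : R) (j : nat) (x : R) : R :=
  rpow (2 * x) (beta * qint beta j) / (2 ^ j * qfact beta j).

Lemma psi1_double beta x : 0 <= x -> 2 * psi1 beta x = rpow (2 * x) beta.
Proof.
  intros Hx. unfold psi1.
  rewrite rpow_mult_distr, (rpow_Rpower 2) by lra.
  replace beta with (1 + (beta - 1)) at 3 by ring.
  rewrite Rpower_plus, Rpower_1 by lra. ring.
Qed.

Lemma psi1_ge0 beta x : 0 <= psi1 beta x.
Proof. unfold psi1. pose proof (Rpower_gt0 2 (beta - 1)); pose proof (rpow_ge0 x beta); nra. Qed.

Lemma psi1_half beta : psi1 beta (1 / 2) = 1 / 2.
Proof.
  assert (H := psi1_double beta (1 / 2) ltac:(lra)).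
  replace (2 * (1 / 2)) with 1 in H by field. rewrite rpow_1_l in H. lra.
Qed.

Lemma psi1_le_half beta x : 0 <= beta -> 0 <= x <= 1 / 2 -> psi1 beta x <= 1 / 2.
Proof.
  intros Hb Hx. rewrite <- (psi1_half beta).
  apply (Rmult_le_reg_l 2); [lra |]. rewrite !psi1_double by lra.
  apply rpow_le; lra.
Qed.

Section Psi1ClosedForm.

Variable beta : R.
Hypothesis Hbeta : 1 < beta.

Lemma is_RInt_iter_psi1_closed j c : 0 <= c ->
  is_RInt (iter_psi1_closed beta j) 0 c
    (rpow (2 * c) (qint beta (S j)) / (2 ^ S j * qfact beta (S j))).
Proof.
  intros Hc.
  pose proof (qfact_gt0 beta j ltac:(lra)) as Hfact.
  pose proof (qint_succ_ge1 beta j ltac:(lra)) as Hint; simpl in Hint.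
  assert (Hexp : beta * qint beta j = 0 \/ 1 < beta * qint beta j).
  { destruct j as [| j]; [left; simpl; ring | right].
    pose proof (qint_succ_ge1 beta j ltac:(lra)); nra. }
  assert (H := is_RInt_scal (V := R_NormedModule) _ _ _ (/ (2 ^ j * qfact beta j)) _
                 (is_RInt_rpow_double _ _ Hexp Hc)).
  pose proof (pow_lt 2 j ltac:(lra)).
  replace (rpow (2 * c) (qint beta (S j)) / (2 ^ S j * qfact beta (S j)))
    with (scal (/ (2 ^ j * qfact beta j))
            (rpow (2 * c) (beta * qint beta j + 1) / (2 * (beta * qint beta j + 1))))
    by (unfold scal; simpl; unfold mult; simpl;
        replace (beta * qint beta j + 1) with (1 + beta * qint beta j) by ring;
        field; repeat split; lra).
  apply is_RInt_ext with (2 := H). intros t _.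
  unfold iter_psi1_closed, scal; simpl; unfold mult; simpl. field; lra.
Qed.

(* [0 < x] is needed for [j = 0], because [rpow 0 0 = 0]. *)
Lemma iter_in_psi1 j x : 0 < x -> iter_in (psi1 beta) 0 j x = iter_psi1_closed beta j x.
Proof.
  revert x. induction j as [| j IH]; intros x Hx.
  - unfold iter_psi1_closed; simpl. rewrite Rmult_0_r, rpow_0_r by lra. field.
  - simpl. rewrite (RInt_ext _ (iter_psi1_closed beta j)).
    2: { intros t Ht. pose proof (psi1_ge0 beta x).
         rewrite Rmin_left, Rmax_right in Ht by lra. apply IH; lra. }
    rewrite (is_RInt_unique _ _ _ _ (is_RInt_iter_psi1_closed j _ (psi1_ge0 beta x))).
    rewrite psi1_double, rpow_mult by lra. reflexivity.
Qed.

Lemma ex_RInt_iter_in_psi1 j c : 0 <= c -> ex_RInt (iter_in (psi1 beta) 0 j) 0 c.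
Proof.
  intros Hc. eexists. apply is_RInt_ext with (2 := is_RInt_iter_psi1_closed j c Hc).
  intros t Ht. rewrite Rmin_left, Rmax_right in Ht by lra.
  symmetry; apply iter_in_psi1; lra.
Qed.

Lemma a_seq_iter_in k : a_seq beta k = iter_in (psi1 beta) 0 k (1 / 2).
Proof. unfold a_seq. rewrite <- itint_iter_in, psi1_half. reflexivity. Qed.

Lemma a_seq_eq k : a_seq beta k = / (2 ^ k * qfact beta k).
Proof.
  rewrite a_seq_iter_in, iter_in_psi1 by lra. unfold iter_psi1_closed.
  replace (2 * (1 / 2)) with 1 by field. rewrite rpow_1_l. apply Rmult_1_l.
Qed.

End Psi1ClosedForm.

Lemma psi2_translate beta y : psi2 beta (y + 1 / 2) = psi1 beta y + 1 / 2.
Proof. unfold psi2, psi1. replace (y + 1 / 2 - 1 / 2) with y by ring. reflexivity. Qed.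

Lemma psi_beta_translate beta y : 0 <= y -> psi_beta beta (y + 1 / 2) = psi1 beta y + 1 / 2.
Proof.
  intros Hy. unfold psi_beta. destruct (Rle_dec (y + 1 / 2) (1 / 2)) as [Hle | _].
  - replace y with 0 by lra. rewrite Rplus_0_l, psi1_half.
    unfold psi1. rewrite rpow_nonpos by lra. ring.
  - apply psi2_translate.
Qed.

Section PsiBeta.

Variable beta : R.
Hypothesis Hbeta : 1 < beta.

Let A := iter_in (psi1 beta) 0.
Let I := iter_in (psi_beta beta) 0.

Lemma b_seq_eq_a_seq k : b_seq beta k = a_seq beta k.
Proof.
  assert (Hone : psi2 beta 1 = 1).
  { replace 1 with (1 / 2 + 1 / 2) at 1 by field. rewrite psi2_translate, psi1_half. field. }
  unfold b_seq. rewrite <- Hone at 2. rewrite itint_iter_in, a_seq_iter_in.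
  rewrite <- (iter_in_translate _ _ 0 (1 / 2) k (1 / 2) (psi2_translate beta)).
  f_equal; field.
Qed.

Lemma d_seq_iter_in k : d_seq beta k = I k 1.
Proof.
  assert (Hone : psi_beta beta 1 = 1).
  { replace 1 with (1 / 2 + 1 / 2) at 1 by field.
    rewrite psi_beta_translate, psi1_half by lra. field. }
  unfold d_seq, I. rewrite <- itint_iter_in, Hone. reflexivity.
Qed.

Lemma is_RInt_iter_in_psi1 l y : is_RInt (A l) 0 (psi1 beta y) (A (S l) y).
Proof.
  apply (RInt_correct (V := R_CompleteNormedModule)), ex_RInt_iter_in_psi1, psi1_ge0.
  exact Hbeta.
Qed.

Lemma iter_in_psi_beta_lower j x : 0 <= x <= 1 / 2 -> I j x = A j x.
Proof.
  apply iter_in_ext_on. intros y Hy.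
  assert (E : psi_beta beta y = psi1 beta y)
    by (unfold psi_beta; destruct (Rle_dec y (1 / 2)); [reflexivity | lra]).
  rewrite E. repeat split; [apply psi1_ge0 | apply psi1_le_half; lra].
Qed.

Lemma iter_in_psi_beta_upper j y : 0 <= y <= 1 / 2 ->
  I j (y + 1 / 2) = sum_f_R0 (fun l => A l y * a_seq beta (j - l)) j.
Proof.
  revert y. induction j as [| j IH]; intros y Hy; [unfold I, A, a_seq; simpl; ring |].
  set (c := psi1 beta y).
  assert (Hc : 0 <= c <= 1 / 2) by (split; [apply psi1_ge0 | apply psi1_le_half; lra]).
  assert (Hlower : is_RInt (I j) 0 (1 / 2) (a_seq beta (S j))).
  { rewrite a_seq_iter_in, <- (psi1_half beta) at 1.
    apply is_RInt_ext with (2 := is_RInt_iter_in_psi1 j (1 / 2)).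
    intros t Ht. rewrite psi1_half, Rmin_left, Rmax_right in Ht by lra.
    symmetry; apply iter_in_psi_beta_lower; lra. }
  assert (Hupper : is_RInt (I j) (0 + 1 / 2) (c + 1 / 2)
                     (sum_f_R0 (fun l => A (S l) y * a_seq beta (j - l)) j)).
  { apply is_RInt_translate.
    apply is_RInt_ext with (f := fun t => sum_f_R0 (fun l => A l t * a_seq beta (j - l)) j).
    - intros t Ht. rewrite Rmin_left, Rmax_right in Ht by lra. symmetry; apply IH; lra.
    - apply is_RInt_sum_f_R0. intros l _.
      apply is_RInt_ext with (f := fun t => scal (a_seq beta (j - l)) (A l t));
        [intros t _; apply Rmult_comm |].
      rewrite Rmult_comm. apply (is_RInt_scal (V := R_NormedModule)), is_RInt_iter_in_psi1. }
  rewrite Rplus_0_l in Hupper.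
  change (I (S j) (y + 1 / 2)) with (RInt (I j) 0 (psi_beta beta (y + 1 / 2))).
  rewrite psi_beta_translate by lra. fold c.
  rewrite (is_RInt_unique _ _ _ _ (is_RInt_Chasles _ _ _ _ _ _ Hlower Hupper)).
  rewrite (decomp_sum _ (S j)) by lia.
  unfold plus; simpl. f_equal. exact (eq_sym (Rmult_1_l _)).
Qed.

Lemma d_seq_convolution n :
  d_seq beta n = sum_f_R0 (fun l => b_seq beta l * a_seq beta (n - l)) n.
Proof.
  assert (H := iter_in_psi_beta_upper n (1 / 2) ltac:(lra)).
  replace (1 / 2 + 1 / 2) with 1 in H by field.
  rewrite d_seq_iter_in, H.
  apply sum_eq; intros l _. rewrite b_seq_eq_a_seq, (a_seq_iter_in beta l). reflexivity.
Qed.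

End PsiBeta.

Lemma succ_mul_pow_le s n : 1 <= s -> INR (S n) * s ^ n <= 1 + INR n * s ^ S n.
Proof.
  intros Hs. induction n as [| n IH]; [simpl; lra |].
  rewrite !S_INR in *. simpl pow in *.
  pose proof (pos_INR n). pose proof (pow_le s n ltac:(lra)).
  assert (0 <= (INR n + 1) * s ^ n * (s - 1) ^ 2) by (apply Rmult_le_pos; [nra | apply pow2_ge_0]).
  nra.
Qed.

(* AM-GM: [[i+1]_{s^2} = 1 + s^2 + ... + s^(2i) >= (i+1) s^i]. *)
Lemma qint_succ_ge s i : 1 <= s -> INR (S i) * s ^ i <= qint (s ^ 2) (S i).
Proof.
  intros Hs. induction i as [| i IH]; [simpl; lra |].
  change (qint (s ^ 2) (S (S i))) with (1 + s ^ 2 * qint (s ^ 2) (S i)).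
  pose proof (succ_mul_pow_le s (S i) Hs).
  assert (s ^ 2 * (INR (S i) * s ^ i) <= s ^ 2 * qint (s ^ 2) (S i))
    by (apply Rmult_le_compat_l; [apply pow2_ge_0 | exact IH]).
  simpl pow in *. nra.
Qed.

Lemma qfact_ge beta k : 1 <= beta ->
  INR (Factorial.fact k) * Rpower beta (INR k * (INR k - 1) / 4) <= qfact beta k.
Proof.
  intros Hb. induction k as [| k IH].
  - simpl. rewrite Rmult_0_l, Rdiv_0_l, Rpower_O by lra. lra.
  - set (s := Rpower beta (1 / 2)).
    assert (Hs : 1 <= s) by (rewrite <- (Rpower_O beta) by lra; apply Rle_Rpower; lra).
    assert (Hs2 : s ^ 2 = beta).
    { unfold s. rewrite <- Rpower_pow, Rpower_mult by apply Rpower_gt0.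
      replace (1 / 2 * INR 2) with 1 by (simpl; field). apply Rpower_1; lra. }
    assert (Hsk : s ^ k = Rpower beta (INR k / 2)).
    { unfold s. rewrite <- Rpower_pow, Rpower_mult by apply Rpower_gt0. f_equal; field. }
    assert (Hq := qint_succ_ge s k Hs). rewrite Hs2, Hsk in Hq.
    change (qfact beta (S k)) with (qfact beta k * qint beta (S k)).
    change (Factorial.fact (S k)) with (S k * Factorial.fact k)%nat.
    replace (INR (S k * Factorial.fact k) * Rpower beta (INR (S k) * (INR (S k) - 1) / 4))
      with ((INR (Factorial.fact k) * Rpower beta (INR k * (INR k - 1) / 4))
            * (INR (S k) * Rpower beta (INR k / 2)))
      by (replace (INR (S k) * (INR (S k) - 1) / 4) with (INR k * (INR k - 1) / 4 + INR k / 2)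
            by (rewrite S_INR; field);
          rewrite mult_INR, Rpower_plus; ring).
    apply Rmult_le_compat; [| | exact IH | exact Hq];
      apply Rmult_le_pos; try apply pos_INR; left; apply Rpower_gt0.
Qed.

Lemma a_seq_le beta k : 1 < beta ->
  a_seq beta k <= Rpower beta (- (INR k * (INR k - 1) / 4)) / (2 ^ k * INR (Factorial.fact k)).
Proof.
  intros Hb. rewrite a_seq_eq, Rpower_Ropp by exact Hb.
  pose proof (pow_lt 2 k ltac:(lra)). pose proof (lt_0_INR _ (Factorial.lt_O_fact k)).
  pose proof (Rpower_gt0 beta (INR k * (INR k - 1) / 4)).
  replace (/ Rpower beta (INR k * (INR k - 1) / 4) / (2 ^ k * INR (Factorial.fact k)))
    with (/ (2 ^ k * (INR (Factorial.fact k) * Rpower beta (INR k * (INR k - 1) / 4))))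
    by (field; lra).
  apply Rinv_le_contravar; [apply Rmult_lt_0_compat; [| apply Rmult_lt_0_compat]; lra |].
  apply Rmult_le_compat_l; [lra | apply qfact_ge; lra].
Qed.

Lemma sum_inv_fact_mul n :
  sum_f_R0 (fun l => / (INR (Factorial.fact l) * INR (Factorial.fact (n - l)))) n
  = 2 ^ n / INR (Factorial.fact n).
Proof.
  pose proof (lt_0_INR _ (Factorial.lt_O_fact n)).
  rewrite (sum_eq _ (fun l => Binomial.C n l * 1 ^ l * 1 ^ (n - l) * / INR (Factorial.fact n))).
  - rewrite <- scal_sum, <- binomial. replace (1 + 1) with 2 by ring. apply Rmult_comm.
  - intros l _. unfold Binomial.C. rewrite !pow1.
    pose proof (lt_0_INR _ (Factorial.lt_O_fact l)).
    pose proof (lt_0_INR _ (Factorial.lt_O_fact (n - l))).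
    field. lra.
Qed.

Lemma sum_f_R0_lt (u w : nat -> R) n :
  (forall l, (l <= n)%nat -> u l <= w l) -> u O < w O -> sum_f_R0 u n < sum_f_R0 w n.
Proof.
  intros Hle H0. induction n as [| n IH]; simpl; [exact H0 |].
  apply Rplus_lt_le_compat; [apply IH; intros l Hl | ]; apply Hle; lia.
Qed.

Lemma a_seq_mul_le beta n l : 1 < beta -> (l <= n)%nat ->
  a_seq beta l * a_seq beta (n - l) <=
  / (INR (Factorial.fact l) * INR (Factorial.fact (n - l)))
  * (Rpower beta (- (INR l * (INR l - 1) / 4) + - (INR (n - l) * (INR (n - l) - 1) / 4)) / 2 ^ n).
Proof.
  intros Hb Hl.
  assert (Hpos : forall k, 0 <= a_seq beta k).
  { intros k. rewrite a_seq_eq by exact Hb. left; apply Rinv_0_lt_compat, Rmult_lt_0_compat;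
      [apply pow_lt; lra | apply qfact_gt0; lra]. }
  eapply Rle_trans; [apply Rmult_le_compat; [apply Hpos | apply Hpos | apply a_seq_le, Hb ..] |].
  replace (2 ^ n) with (2 ^ l * 2 ^ (n - l)) by (rewrite <- pow_add; f_equal; lia).
  pose proof (pow_lt 2 l ltac:(lra)). pose proof (pow_lt 2 (n - l) ltac:(lra)).
  pose proof (lt_0_INR _ (Factorial.lt_O_fact l)).
  pose proof (lt_0_INR _ (Factorial.lt_O_fact (n - l))).
  rewrite Rpower_plus. right; field; lra.
Qed.

Lemma d_seq_lt beta n : 1 < beta -> (1 <= n)%nat ->
  d_seq beta n < Rpower beta ((- (INR n) ^ 2 / 2 + INR n) / 4) / INR (Factorial.fact n).
Proof.
  intros Hb Hn.
  set (E := (- (INR n) ^ 2 / 2 + INR n) / 4).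
  set (w := fun l => / (INR (Factorial.fact l) * INR (Factorial.fact (n - l)))
                     * (Rpower beta E / 2 ^ n)).
  pose proof (pow_lt 2 n ltac:(lra)).
  pose proof (lt_0_INR _ (Factorial.lt_O_fact n)).
  assert (Hsum : sum_f_R0 w n = Rpower beta E / INR (Factorial.fact n)).
  { unfold w. rewrite <- scal_sum, sum_inv_fact_mul. field; lra. }
  rewrite d_seq_convolution, <- Hsum by exact Hb.
  apply sum_f_R0_lt.
  - intros l Hl. rewrite b_seq_eq_a_seq by exact Hb.
    eapply Rle_trans; [apply a_seq_mul_le; assumption |].
    apply Rmult_le_compat_l;
      [left; apply Rinv_0_lt_compat, Rmult_lt_0_compat; apply lt_0_INR, Factorial.lt_O_fact |].
    apply Rmult_le_compat_r; [left; apply Rinv_0_lt_compat; lra |].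
    apply Rle_Rpower; [lra |]. unfold E.
    rewrite minus_INR by exact Hl. pose proof (pow2_ge_0 (2 * INR l - INR n)). nra.
  - rewrite Nat.sub_0_r. unfold w. simpl (Factorial.fact 0).
    replace (b_seq beta 0) with 1 by reflexivity. rewrite Rmult_1_l, Nat.sub_0_r.
    eapply Rle_lt_trans; [apply a_seq_le, Hb |].
    replace (/ (INR 1 * INR (Factorial.fact n)) * (Rpower beta E / 2 ^ n))
      with (Rpower beta E / (2 ^ n * INR (Factorial.fact n))) by (simpl; field; lra).
    apply Rmult_lt_compat_r; [apply Rinv_0_lt_compat; nra |].
    apply Rpower_lt; [exact Hb |]. unfold E.
    assert (1 <= INR n) by (apply (le_INR 1); exact Hn). nra.
Qed.

Theorem lemma4p6 (beta : R) (n : nat) :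
  1 < beta -> (1 <= n)%nat ->
  d_seq beta n = sum_f_R0 (fun l => b_seq beta l * a_seq beta (n - l)) n /\
  d_seq beta n < Rpower beta ((- (INR n)^2 / 2 + INR n) / 4) / INR (Factorial.fact n).
Proof.
  intros Hb Hn. split.
  - apply d_seq_convolution, Hb.
  - apply d_seq_lt; assumption.
Qed.
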